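(* In the setting in the context, let $$U(D)=\exp\left\{-\frac{\lambda S}{N}\left(1+\frac{\mu}{B\mu-\mu}e^{-B\mu D}-\frac{B\mu}{B\mu-\mu}e^{-\mu D}\right)\right\}$$ be the upper bound on the deadline violation probability under the BETA policy. In the short deadline regime $D\to 0$ (i.e. $\mu D\to 0$ and $B\mu D\to 0$), $U(D)=\exp\{-\frac{\lambda S}{2N}B\mu^2D^2+o(D^2)\}$, so the task computation time lower bound $t_{\mathrm D}$ follows the Rayleigh distribution $$\Pr\{t_{\mathrm D}<D\}=1-e^{-\frac{\lambda S}{2N}B\mu^2D^2},$$ the deadline violation probability upper bound is $1-\Pr\{t_{\mathrm D}<D\}$ for deadline $D$, and the mean computation delay is $\mathbb E[t_{\mathrm D}]=\sqrt{\frac{N\pi}{2\lambda B S\mu^2}}$.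
   Context: Model. Roads of total length $S$ carry vehicles with density $\lambda$; the number of vehicles is Poisson with mean $\lambda S$. There are $B\neq 1$ RSUs. Each vehicle meets any given RSU after an exponential time of rate $\mu$, independently and memorylessly. A task-RSU holds $N$ tasks with common deadline $D$; at each vehicle meeting with the task-RSU an unfinished task is replicated on that vehicle, and a replica's output is returned when the carrying vehicle next meets any of the $B$ RSUs; a task is finished when one replica returns. Tasks are assigned by the BETA policy (always replicate an unfinished task with the fewest replicas). It has been established that under this policy the deadline violation probability is at most $U(D)$. *)

From HB Require Import structures.
From mathcomp Require Import all_boot all_order all_algebra.
From mathcomp Require Import all_classical all_reals all_analysis.
Set Implicit Arguments. Unset Strict Implicit. Unset Printing Implicit Defensive.
Import Order.TTheory GRing.Theory Num.Theory.
Local Open Scope ring_scope.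

Definition U_bound (R : realType) (lam S mu : R) (N B : nat) (D : R) : R :=
  expR (- (lam * S / N%:R) *
        (1 + mu / (B%:R * mu - mu) * expR (- (B%:R * mu * D))
           - B%:R * mu / (B%:R * mu - mu) * expR (- (mu * D)))).

Definition rayleigh_c (R : realType) (lam S mu : R) (N B : nat) : R :=
  lam * S / (2 * N%:R) * B%:R * mu ^+ 2.

From HB Require Import structures.
From mathcomp Require Import all_boot all_order all_algebra.
From mathcomp Require Import all_classical all_reals all_analysis.
From mathcomp Require Import ring lra measurable_realfun.
Import Order.TTheory GRing.Theory Num.Theory.
Import numFieldNormedType.Exports.
Local Open Scope classical_set_scope.
Local Open Scope ring_scope.

(* Write a = B mu.  The exponent of U(D) is
   -(lam S / N) (mu e^{-aD} - a e^{-mu D} + a - mu) / (a - mu): the terms of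
   order 0 and 1 of the two exponentials cancel, the terms of order 2 give
   -c D^2, and the rest is O(D^3) because |e^y - 1 - y - y^2/2| <= |y|^3/6 for
   y <= 0.  A Rayleigh variable is a.s. nonnegative with tail
   P(t > r) = e^{-c r^2}, so its mean is the Gaussian integral
   int_0^oo e^{-c r^2} dr = sqrt(pi / c) / 2. *)

Section exp_remainder.
Context {R : realType}.

Definition expR_rem2 (y : R) := expR y - 1 - y - y ^+ 2 / 2.

Lemma ger0_derive_le_at0 (f f' : R -> R) :
  (forall x : R, is_derive x (1 : R) f (f' x)) -> (forall x, x < 0 -> 0 <= f' x) ->
  forall y, y <= 0 -> f y <= f 0.
Proof.
move=> df f'_ge0 y y_le0.
have derf x : derivable f x 1 by have [] := df x.
apply: (@ger0_derive1_ndecrNy _ f 0) => // [x|].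
- by rewrite in_itv /= => x_lt0; rewrite derive1E; case: (df x) => _ ->; exact: f'_ge0.
- by apply: derivable_within_continuous => x _.
Qed.

Lemma ler0_derive_ge_at0 (f f' : R -> R) :
  (forall x : R, is_derive x (1 : R) f (f' x)) -> (forall x, x < 0 -> f' x <= 0) ->
  forall y, y <= 0 -> f 0 <= f y.
Proof.
move=> df f'_le0 y y_le0.
have derf x : derivable f x 1 by have [] := df x.
apply: (@ler0_derive1_nincrNy _ f 0) => // [x|].
- by rewrite in_itv /= => x_lt0; rewrite derive1E; case: (df x) => _ ->; exact: f'_le0.
- by apply: derivable_within_continuous => x _.
Qed.

Lemma expR_rem2N_le (x : R) : 0 <= x -> `|expR_rem2 (- x)| <= x ^+ 3 / 6.
Proof.
move=> x_ge0.
have rem2_0 : expR_rem2 0 = 0 by rewrite /expR_rem2 expR0 expr0n /=; lra.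
have rem2_le0 (y : R) : y <= 0 -> expR_rem2 y <= 0.
  rewrite -[X in _ -> _ <= X]rem2_0.
  apply: (@ger0_derive_le_at0 _ (fun y => expR y - 1 - y)) => z.
  - rewrite /expR_rem2; apply: is_derive_eq.
    by rewrite !scaler0 add0r subr0 /GRing.scale /=; field.
  - by move=> _; have := expR_ge1Dx z; lra.
have rem3_ge0 (y : R) : y <= 0 -> 0 <= expR_rem2 y - y ^+ 3 / 6.
  rewrite [X in _ -> X <= _](_ : 0 = expR_rem2 0 - 0 ^+ 3 / 6); last first.
    by rewrite rem2_0 expr0n /=; lra.
  apply: (@ler0_derive_ge_at0 (fun y => expR_rem2 y - y ^+ 3 / 6) expR_rem2) => z.
  - rewrite /expR_rem2; apply: is_derive_eq.
    by rewrite !scaler0 add0r subr0 /GRing.scale /=; field.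
  - by move/ltW; exact: rem2_le0.
have Nx_le0 : - x <= 0 by rewrite oppr_le0.
have Nx3 : (- x) ^+ 3 = - x ^+ 3 by ring.
rewrite ler0_norm ?rem2_le0 //.
by have := rem3_ge0 _ Nx_le0; rewrite Nx3; lra.
Qed.

End exp_remainder.

Section short_deadline.
Context {R : realType}.

Lemma ln_U_bound_expansion (lam S mu : R) (N B : nat) (D : R) :
  mu != 0 -> B != 1%N -> N != 0%N ->
  ln (U_bound lam S mu N B D) + rayleigh_c lam S mu N B * D ^+ 2 =
  - (lam * S / N%:R / (B%:R * mu - mu)) *
    (mu * expR_rem2 (- (B%:R * mu * D)) - B%:R * mu * expR_rem2 (- (mu * D))).
Proof.
move=> mu0 B1 N0.
have Bmu_mu : B%:R * mu - mu != 0.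
  by rewrite -{2}(mul1r mu) -mulrBl mulf_neq0 // subr_eq0 pnatr_eq1.
rewrite /U_bound expRK /rayleigh_c /expR_rem2; field.
by rewrite Bmu_mu pnatr_eq0.
Qed.

Lemma ln_U_bound_cubic (lam S mu : R) (N B : nat) :
  0 < mu -> B != 1%N -> N != 0%N ->
  exists2 K, 0 <= K & forall D, 0 <= D ->
    `|ln (U_bound lam S mu N B D) + rayleigh_c lam S mu N B * D ^+ 2| <= K * D ^+ 3.
Proof.
move=> mu0 B1 N0; have mu_ge0 := ltW mu0.
set a := B%:R * mu; have a_ge0 : 0 <= a by rewrite /a mulr_ge0.
set k := lam * S / N%:R / (a - mu).
exists (`|k| * ((mu * a ^+ 3 + a * mu ^+ 3) / 6)).
  by rewrite mulr_ge0 ?divr_ge0 ?addr_ge0 ?mulr_ge0 ?exprn_ge0.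
move=> D D0; rewrite ln_U_bound_expansion ?(gt_eqF mu0) // -/a -/k.
rewrite normrM normrN -[`|k| * _ * _]mulrA; apply: ler_wpM2l => //.
have remaD := expR_rem2N_le _ (mulr_ge0 a_ge0 D0).
have remmuD := expR_rem2N_le _ (mulr_ge0 mu_ge0 D0).
apply: (le_trans (ler_normB _ _)).
rewrite (normrM mu) (normrM a) (ger0_norm mu_ge0) (ger0_norm a_ge0).
suff -> : (mu * a ^+ 3 + a * mu ^+ 3) / 6 * D ^+ 3
    = mu * ((a * D) ^+ 3 / 6) + a * ((mu * D) ^+ 3 / 6).
  by apply: lerD; apply: ler_wpM2l.
by field.
Qed.

Lemma littleo_sqr_of_cubic_bound (f : R -> R) (K : R) : 0 <= K ->
  (forall D, 0 < D -> `|f D| <= K * D ^+ 3) ->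
  forall eps, 0 < eps -> exists2 delta, 0 < delta &
    forall D, 0 < D -> D < delta -> `|f D| <= eps * D ^+ 2.
Proof.
move=> K0 fK eps eps0; exists (eps / (K + 1)); first by rewrite divr_gt0 // ltr_wpDl.
move=> D D0; rewrite ltr_pdivlMr ?ltr_wpDl // => DK.
apply: (le_trans (fK D D0)); rewrite exprS mulrA.
have KD : K * D <= eps by nra.
by rewrite ler_pM2r ?exprn_gt0.
Qed.

End short_deadline.

Section scaled_gauss_integral.
Context {R : realType}.

Lemma integral0y_expR_sqr (c : R) : 0 < c ->
  (\int[lebesgue_measure]_(x in `[0%R, +oo[) (expR (- (c * x ^+ 2)))%:E
    = (Num.sqrt pi / 2 / Num.sqrt c)%:E)%E.
Proof.
move=> c0; set k := Num.sqrt c.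
have k0 : 0 < k by rewrite sqrtr_gt0.
pose F : R -> R := fun x => k * x.
have dF (x : R) : is_derive x (1 : R) F k.
  by apply: is_derive_eq; rewrite /GRing.scale /= mulr1.
have F'E : derive1 F = cst k.
  by apply/funext => x; rewrite derive1E; case: (dF x).
have derF x : derivable F x 1 by have [] := dF x.
have gaussF x : gauss_fun (F x) = expR (- (c * x ^+ 2)).
  by rewrite /gauss_fun /F exprMn sqr_sqrtr ?ltW.
have cF : continuous F.
  by move=> x; apply: differentiable_continuous; exact/derivable1_diffP.
have F0 : F 0 = 0 by rewrite /F mulr0.
have sub : (Num.sqrt pi / 2)%:E = (\int[lebesgue_measure]_(x in `[0%R, +oo[)
    (((gauss_fun \o F) * cst k) x)%:E)%E.
  have := @increasing_ge0_integration_by_substitutiony R F gauss_fun 0.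
  rewrite F0 integral0y_gauss F'E; apply.
  - by move=> x y _ _ xy; rewrite ltr_pM2l.
  - by move=> x _; exact: cst_continuous.
  - exact: is_cvg_cst.
  - exact: is_cvg_cst.
  - by split; [move=> x _; exact: derF | exact: cvg_at_right_filter (cF 0)].
  - exact: gt0_cvgMry k0 cvg_id.
  - exact: continuous_subspaceT continuous_gauss_fun.
  - by move=> x _; exact: gauss_fun_ge0.
have mexp : measurable_fun (`[0%R, +oo[ : set R) (fun x : R => (expR (- (c * x ^+ 2)))%:E).
  apply/measurable_EFinP/measurable_funTS.
  rewrite (_ : (fun x => _) = gauss_fun \o F); last by apply/funext => x; rewrite /= gaussF.
  exact: measurableT_comp measurable_gauss_fun (continuous_measurable_fun cF).
have integrandE : (fun x => (((gauss_fun \o F) * cst k) x)%:E)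
    = (fun x => k%:E * (expR (- (c * x ^+ 2)))%:E)%E.
  by apply/funext => x; rewrite !fctE gaussF -EFinM mulrC.
rewrite integrandE ge0_integralZl ?lee_fin ?ltW // in sub.
by rewrite EFinM sub muleAC -EFinM mulfV ?gt_eqF // mul1e.
Qed.

End scaled_gauss_integral.

Section random_variable_law.
Context d (T : measurableType d) (R : realType) (P : probability T R).
Variable X : {RV P >-> R}.

Lemma set_lt_preimage (s : R) : [set w | X w < s] = X @^-1` `]-oo, s[.
Proof. by apply/seteqP; split=> w; rewrite /= in_itv. Qed.

Lemma prob_ltE (s : R) : P [set w | X w < s] = distribution P X `]-oo, s[.
Proof. by rewrite set_lt_preimage. Qed.

Lemma cdf_eq_of_prob_lt (F : R -> R) (r : R) : F x @[x --> r^'+] --> F r ->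
  (forall s, r < s -> P [set w | X w < s] = (F s)%:E) -> cdf X r = (F r)%:E.
Proof.
move=> Fr XF; have EFr : ((F x)%:E @[x --> r^'+] --> (F r)%:E)%E.
  exact: cvg_comp Fr _.
have rs : \forall s \near r^'+, r < s by exact: nbhs_right_gt.
apply/le_anti/andP; split.
- apply: (lee_cvg_to (cvg_cst (cdf X r)) EFr); near=> s.
  rewrite -XF; last by near: s.
  rewrite prob_ltE; apply: le_measure; rewrite ?inE //.
  by apply: subitvPr; rewrite bnd_simp; near: s.
- apply: (lee_cvg_to EFr (@cdf_right_continuous _ _ _ P X r)); near=> s.
  rewrite -XF; last by near: s.
  rewrite prob_ltE; apply: le_measure; rewrite ?inE //.
  by apply: subitvPr; rewrite bnd_simp.
Unshelve. all: by end_near.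
Qed.

Lemma expectation_ccdf_of_prob_lt0 : P [set w | X w < 0] = 0%E ->
  ('E_P[X] = \int[lebesgue_measure]_(r in `[0%R, +oo[) ccdf X r)%E.
Proof.
move=> Xneg0.
have EXpos : ('E_P[X] = 'E_P[X^\+])%E.
  rewrite !expectation_def; apply: ae_eq_integral => //.
  - by apply/measurable_EFinP; exact: measurable_funPT.
  - by apply/measurable_EFinP; exact: measurable_funPT.
  exists [set w | X w < 0]; split => //.
  - by rewrite set_lt_preimage; exact: measurable_funPTI.
  move=> w /= Xw; rewrite ltNge; apply/negP => Xw_ge0.
  by apply: Xw => _; rewrite /funrpos max_l.
rewrite EXpos ge0_expectation_ccdf; last exact: funrpos_ge0.
apply: eq_integral => r; rewrite inE /= in_itv /= andbT => r_ge0.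
congr (P _); apply/seteqP; split=> w;
  by rewrite /= !in_itv /= !andbT /funrpos lt_max (ltNge r 0) r_ge0 orbF.
Qed.

Lemma expectation_rayleigh (c : R) : 0 < c ->
  (forall D, 0 <= D -> P [set w | X w < D] = (1 - expR (- (c * D ^+ 2)))%:E) ->
  ('E_P[X] = (Num.sqrt pi / 2 / Num.sqrt c)%:E)%E.
Proof.
move=> c0 XF.
have Xneg0 : P [set w | X w < 0] = 0%E by rewrite XF // expr0n mulr0 oppr0 expR0 subrr.
rewrite expectation_ccdf_of_prob_lt0 // -integral0y_expR_sqr //.
apply: eq_integral => r; rewrite inE /= in_itv /= andbT => r_ge0.
rewrite ccdf_1_cdf (@cdf_eq_of_prob_lt (fun x => 1 - expR (- (c * x ^+ 2)))).
- by rewrite -EFinB; congr EFin; ring.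
- apply: cvg_at_right_filter.
  apply: (@differentiable_continuous _ _ _ r (fun z : R => 1 - expR (- (c * z ^+ 2)))).
  apply/derivable1_diffP; exact: ex_derive.
- by move=> s rs; rewrite XF // ltW // (le_lt_trans r_ge0).
Qed.
End random_variable_law.

Section rayleigh_constant.
Context {R : realType} (lam S mu : R) (N B : nat).
Hypotheses (lam_gt0 : 0 < lam) (S_gt0 : 0 < S) (mu_gt0 : 0 < mu).
Hypotheses (N_gt0 : (0 < N)%N) (B_gt0 : (0 < B)%N).

Lemma rayleigh_c_gt0 : 0 < rayleigh_c lam S mu N B.
Proof. by rewrite /rayleigh_c !(mulr_gt0, invr_gt0, exprn_gt0, ltr0n). Qed.

Lemma sqrt_pi_div_rayleigh_c :
  Num.sqrt pi / 2 / Num.sqrt (rayleigh_c lam S mu N B)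
    = Num.sqrt (N%:R * pi / (2 * lam * B%:R * S * mu ^+ 2)).
Proof.
have c_gt0 := rayleigh_c_gt0.
rewrite -[LHS]ger0_norm ?divr_ge0 ?sqrtr_ge0 // -sqrtr_sqr; congr Num.sqrt.
rewrite !expr_div_n !sqr_sqrtr ?pi_ge0 ?ltW // /rayleigh_c.
by field; rewrite !gt_eqF ?ltr0n.
Qed.
End rayleigh_constant.

Theorem corollary1 (R : realType) (lam S mu : R) (N B : nat)
  (hlam : 0 < lam) (hS : 0 < S) (hmu : 0 < mu) (hN : (0 < N)%N)
  (hB0 : (0 < B)%N) (hB1 : B <> 1%N) :
  (* ln U(D) = - (lam S /(2N)) B mu^2 D^2 + o(D^2) as D -> 0+ *)
  (forall eps : R, 0 < eps -> exists2 delta : R, 0 < delta &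
     forall D : R, 0 < D -> D < delta ->
       `| ln (U_bound lam S mu N B D) + rayleigh_c lam S mu N B * D ^+ 2 |
         <= eps * D ^+ 2)
  /\
  (* any t_D with Rayleigh law Pr{t_D < D} = 1 - exp(-c D^2) has the stated mean *)
  (forall (d : measure_display) (T : measurableType d)
          (P : probability T R) (tD : {RV P >-> R}),
     (forall D : R, 0 <= D ->
        P [set w : T | tD w < D] = (1 - expR (- (rayleigh_c lam S mu N B * D ^+ 2)))%:E) ->
     ('E_P[tD] = (Num.sqrt (N%:R * pi / (2 * lam * B%:R * S * mu ^+ 2)))%:E)%E).
Proof.
split.
- have [K K_ge0 UK] := ln_U_bound_cubic lam S mu N B hmu (introN eqP hB1) (lt0n_neq0 hN).
  by apply: littleo_sqr_of_cubic_bound K_ge0 _ => D /ltW /UK.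
- move=> d T P tD /expectation_rayleigh ->; last exact: rayleigh_c_gt0.
  by rewrite sqrt_pi_div_rayleigh_c.
Qed.
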